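(* Every symmetric adversary $\mathcal A\subseteq 2^\Pi$ is fair, i.e. for all $P\subseteq\Pi$ and $Q\subseteq P$, $\mathit{setcon}(\mathcal A|_{P,Q})=\min(|Q|,\mathit{setcon}(\mathcal A|_P))$.
   Context: An adversary is a set $\mathcal A\subseteq 2^\Pi$ of subsets (live sets) of the process set $\Pi=\{p_1,\dots,p_n\}$. It is symmetric if for all $S\in\mathcal A$ and all $S'\subseteq\Pi$ with $|S'|=|S|$, $S'\in\mathcal A$. $\mathcal A|_P=\{S\in\mathcal A: S\subseteq P\}$ and $\mathcal A|_{P,Q}=\{S\in\mathcal A|_P: S\cap Q\neq\emptyset\}$. The set consensus power is defined recursively by $\mathit{setcon}(\emptyset)=0$ and, for $\mathcal A\ne\emptyset$, $\mathit{setcon}(\mathcal A)=\max_{S\in\mathcal A}\min_{a\in S}\mathit{setcon}(\mathcal A|_{S\setminus\{a\}})+1$. $\mathcal A$ is fair if for all $P\subseteq\Pi$ and $Q\subseteq P$, $\mathit{setcon}(\mathcal A|_{P,Q})=\min(|Q|,\mathit{setcon}(\mathcal A|_P))$. *)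

From mathcomp Require Import all_boot.
Set Implicit Arguments. Unset Strict Implicit. Unset Printing Implicit Defensive.

(* Processes Pi = 'I_n; an adversary is a set of live sets. *)
Definition adversary (n : nat) := {set {set 'I_n}}.

Definition restr n (A : adversary n) (P : {set 'I_n}) : adversary n :=
  [set S in A | S \subset P].

Definition restr2 n (A : adversary n) (P Q : {set 'I_n}) : adversary n :=
  [set S in restr A P | S :&: Q != set0].

Definition symmetric_adv n (A : adversary n) : Prop :=
  forall S S' : {set 'I_n}, S \in A -> #|S'| = #|S| -> S' \in A.

(* setcon with fuel; with fuel > size of every live set, it computes
   setcon(A) = max_{S in A} min_{a in S} setcon(A|_{S\{a}}) + 1,
   setcon(empty) = 0. *)
Fixpoint setcon_fuel n (k : nat) (A : adversary n) : nat :=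
  match k with
  | 0 => 0
  | k'.+1 =>
      if A == set0 then 0 else
      \max_(S in A) (\big[minn/n.+1]_(a in S) setcon_fuel k' (restr A (S :\ a))).+1
  end.

Definition setcon n (A : adversary n) : nat := setcon_fuel n.+2 A.

Definition fair n (A : adversary n) : Prop :=
  forall P Q : {set 'I_n}, Q \subset P ->
    setcon (restr2 A P Q) = minn #|Q| (setcon (restr A P)).

Lemma setcon_empty n : setcon (set0 : adversary n) = 0.
Proof. by rewrite /setcon /= eqxx. Qed.

From mathcomp Require Import all_boot.
From mathcomp Require Import zify.
Set Implicit Arguments. Unset Strict Implicit.

(* In a symmetric adversary without the empty live set, setcon (A|_X) depends
   only on #|X|: a live set of some size inside X can be moved by symmetry
   inside any Y of the same size.  The bound setcon (A|_{P,Q}) <= #|Q| holds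
   for every adversary, since each level of the recursion can drop a process
   of Q, and setcon (A|_{P,Q}) <= setcon (A|_P) is monotonicity.  For the
   converse, let S be a live set of size k in P realizing setcon (A|_P) and
   pick W in P of size k meeting Q in min(k, #|Q|) processes; W is live by
   symmetry, and induction on #|P| bounds each term of the recursion at W. *)

Lemma bigmin_leq (I : finType) (S : {pred I}) (F : I -> nat) x i0 :
  i0 \in S -> \big[minn/x]_(i in S) F i <= F i0.
Proof.
move=> Si0; rewrite -big_filter.
have : i0 \in [seq i <- index_enum I | i \in S] by rewrite mem_filter Si0 mem_index_enum.
elim: [seq _ <- _ | _] => // j r IH; rewrite big_cons inE => /orP[/eqP <-|/IH le_r].
  exact: geq_minl.
by rewrite geq_min le_r orbT.
Qed.

Lemma bigmin_geq (I : finType) (S : {pred I}) (F : I -> nat) x m :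
  m <= x -> (forall i, i \in S -> m <= F i) -> m <= \big[minn/x]_(i in S) F i.
Proof.
by move=> le_mx le_mF; elim/big_ind: _ => // u v le_mu le_mv; rewrite leq_min le_mu.
Qed.

Lemma leq_bigmin (I : finType) (S : {pred I}) (F G : I -> nat) x :
  (forall i, i \in S -> F i <= G i) ->
  \big[minn/x]_(i in S) F i <= \big[minn/x]_(i in S) G i.
Proof.
move=> le_FG; elim/big_ind2: _ => // u1 u2 v1 v2 le_u le_v.
by rewrite leq_min !geq_min le_u le_v orbT.
Qed.

Section Setcon.
Variable n : nat.
Implicit Types (B C : adversary n) (P Q S T W X Y : {set 'I_n}).

Lemma leq_cards_ord X : #|X| <= n.
Proof. by have := max_card X; rewrite card_ord. Qed.

Lemma cardsD1_in S a : a \in S -> #|S :\ a| = #|S|.-1.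
Proof. by move=> Sa; rewrite (cardsD1 a S) Sa. Qed.

Lemma card_restrD1 B S a T : a \in S -> T \in restr B (S :\ a) -> #|T| < #|S|.
Proof.
move=> Sa; rewrite inE => /andP[_ /subset_leq_card le_T].
exact: leq_ltn_trans le_T (proper_card (properD1 Sa)).
Qed.

Lemma setcon_fuel_stable k k' B :
  (forall S, S \in B -> #|S| < k) -> k <= k' -> setcon_fuel k' B = setcon_fuel k B.
Proof.
elim: k k' B => [|k IH] [|k'] B szB //= le_kk'.
  have -> : B = set0 by apply/setP => S; rewrite inE; apply/negbTE/negP => /szB.
  by rewrite eqxx.
case: (B == set0) => //; apply: eq_bigr => S SB; congr _.+1.
apply: eq_bigr => a Sa; apply: IH => // T /(card_restrD1 Sa) lt_TS.
by have := szB S SB; lia.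
Qed.

Lemma setcon_fuelS k B : setcon_fuel k.+1 B = if B == set0 then 0 else
  \max_(S in B) (\big[minn/n.+1]_(a in S) setcon_fuel k (restr B (S :\ a))).+1.
Proof. by []. Qed.

Lemma setconE B : setcon B = if B == set0 then 0 else
  \max_(S in B) (\big[minn/n.+1]_(a in S) setcon (restr B (S :\ a))).+1.
Proof.
rewrite /setcon setcon_fuelS; case: (B == set0) => //.
apply: eq_bigr => S _; congr _.+1; apply: eq_bigr => a _.
by symmetry; apply: setcon_fuel_stable => // T _; rewrite ltnS leq_cards_ord.
Qed.

Lemma setcon_ge_mem B S : S \in B ->
  (\big[minn/n.+1]_(a in S) setcon (restr B (S :\ a))).+1 <= setcon B.
Proof.
move=> SB; rewrite setconE; case: eqP => [B0|_]; last exact: leq_bigmax_cond.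
by move: SB; rewrite B0 inE.
Qed.

Lemma setcon_gt B S m : S \in B -> m <= n.+1 ->
  (forall a, a \in S -> m <= setcon (restr B (S :\ a))) -> m < setcon B.
Proof.
by move=> SB le_mn le_m; apply: leq_trans (setcon_ge_mem SB); exact: bigmin_geq.
Qed.

Lemma setcon_leq B m :
  (forall S, S \in B -> exists2 a, a \in S & setcon (restr B (S :\ a)) < m) ->
  setcon B <= m.
Proof.
move=> lt_m; rewrite setconE; case: ifP => // _.
apply/bigmax_leqP => S /lt_m[a Sa lt_a].
exact: leq_ltn_trans (bigmin_leq _ _ Sa) lt_a.
Qed.

Lemma restr_restr B P X : X \subset P -> restr (restr B P) X = restr B X.
Proof.
move=> sXP; apply/setP => S; rewrite !inE.
by case sSX: (S \subset X); rewrite ?andbF // (subset_trans sSX sXP) !andbT.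
Qed.

Lemma restr2_restr B P Q X : X \subset P -> restr (restr2 B P Q) X = restr2 B X Q.
Proof.
move=> sXP; apply/setP => S; rewrite !inE.
by case sSX: (S \subset X); rewrite ?andbF // (subset_trans sSX sXP) !andbT.
Qed.

Lemma restr2_id B X : set0 \notin B -> restr2 B X X = restr B X.
Proof.
move=> B0; apply/setP => S; rewrite !inE; case: (S \in B) / boolP => //= SB.
case: (boolP (S \subset X)) => //= /setIidPl ->.
by apply: contraNneq B0 => <-.
Qed.

Lemma setcon_sub B C : B \subset C -> setcon B <= setcon C.
Proof.
suff IH m : forall B C, (forall S, S \in B -> #|S| < m) -> B \subset C ->
    setcon B <= setcon C.
  by move=> sBC; apply: (IH n.+1) sBC => S _; rewrite ltnS leq_cards_ord.
elim: m => [|m IH] {}B {}C szB sBC.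
  have -> : B = set0 by apply/setP => S; rewrite inE; apply/negbTE/negP => /szB.
  by rewrite setcon_empty.
rewrite [setcon B]setconE; case: ifP => // _.
apply/bigmax_leqP => S SB; apply: leq_trans (setcon_ge_mem (subsetP sBC S SB)).
rewrite ltnS; apply: leq_bigmin => a Sa; apply: IH.
  by move=> T /(card_restrD1 Sa) lt_TS; have := szB S SB; lia.
by apply/subsetP => T; rewrite !inE => /andP[/(subsetP sBC) -> ->].
Qed.

Lemma setcon_restr2_leq_card B P Q : setcon (restr2 B P Q) <= #|Q :&: P|.
Proof.
have [m] := ubnP #|P|; elim: m P => // m IH P ltPm.
apply: setcon_leq => S; rewrite !inE => /andP[/andP[_ sSP] /set0Pn[a]].
rewrite inE => /andP[Sa Qa]; exists a => //.
rewrite restr2_restr ?(subset_trans (subD1set S a) sSP) //.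
apply: leq_ltn_trans (IH _ _) _.
  by have := proper_card (properD1 Sa); have := subset_leq_card sSP; lia.
apply: proper_card; apply/properP; split; first exact/setIS/subset_trans/sSP/subD1set.
by exists a; rewrite !inE ?Qa ?(subsetP sSP) ?eqxx.
Qed.

Lemma setcon_restr_leq_card B X : set0 \notin B -> setcon (restr B X) <= #|X|.
Proof. by move=> B0; have := setcon_restr2_leq_card B X X; rewrite setIid restr2_id. Qed.

Lemma exists_subset_card X m : m <= #|X| -> exists2 Y : {set 'I_n}, Y \subset X & #|Y| = m.
Proof.
elim: m => [|m IH] le_mX; first by exists set0; rewrite ?sub0set ?cards0.
have [Y sYX cardY] := IH (ltnW le_mX).
have /card_gt0P[x] : 0 < #|X :\: Y| by rewrite cardsDS // cardY subn_gt0.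
rewrite inE => /andP[Yx Xx]; exists (x |: Y); first by rewrite subUset sub1set Xx.
by rewrite cardsU1 (negbTE Yx) cardY.
Qed.

Lemma exists_subset_meet P Q k : k <= #|P| ->
  exists W : {set 'I_n}, [/\ W \subset P, #|W| = k & #|Q :&: W| = minn k #|Q :&: P|].
Proof.
move=> le_kP.
have [T sT cardT] := exists_subset_card (geq_minr k #|Q :&: P|).
have [U sU cardU] : exists2 U : {set 'I_n}, U \subset P :\: Q & #|U| = k - minn k #|Q :&: P|.
  by apply: exists_subset_card; have := cardsID Q P; rewrite (setIC P Q); lia.
have sTQ : T \subset Q := subset_trans sT (subsetIl _ _).
have QU0 : Q :&: U = set0.
  apply/setP => x; rewrite !inE; apply/negbTE/negP => /andP[Qx /(subsetP sU)].
  by rewrite inE Qx.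
have TU0 : T :&: U = set0 by apply/eqP; rewrite -subset0 -QU0 setSI.
exists (T :|: U); split.
- by rewrite subUset (subset_trans sT (subsetIr _ _)) (subset_trans sU (subsetDl _ _)).
- by rewrite cardsU TU0 cards0 subn0 cardT cardU subnKC ?geq_minl.
- by rewrite setIUr QU0 setU0 (setIidPr sTQ).
Qed.

End Setcon.

Section Symmetric.
Variables (n : nat) (A : adversary n).
Hypotheses (A0 : set0 \notin A) (symA : symmetric_adv A).
Implicit Types (P Q S W X Y : {set 'I_n}).

Lemma mem_live S : S \in A -> exists a, a \in S.
Proof. by move=> SA; apply/set0Pn; apply: contraNneq A0 => <-. Qed.

Lemma setcon_restr_leq_n X : setcon (restr A X) <= n.
Proof. exact: leq_trans (setcon_restr_leq_card X A0) (leq_cards_ord X). Qed.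

Lemma setcon_restr_card_leq X Y :
  #|X| = #|Y| -> setcon (restr A X) <= setcon (restr A Y).
Proof.
have [m] := ubnP #|X|; elim: m X Y => // m IH X Y ltXm eqXY.
apply: setcon_leq => S; rewrite inE => /andP[SA sSX].
have [a Sa] := mem_live SA; exists a => //.
have [S' sS'Y cardS'] : exists2 S' : {set 'I_n}, S' \subset Y & #|S'| = #|S|.
  by apply: exists_subset_card; rewrite -eqXY subset_leq_card.
have S'R : S' \in restr A Y by rewrite inE sS'Y (symA SA cardS').
rewrite restr_restr ?(subset_trans (subD1set S a) sSX) //.
apply: setcon_gt S'R _ _; first exact: leq_trans (setcon_restr_leq_n _) (leqnSn n).
move=> b S'b; rewrite restr_restr ?(subset_trans (subD1set S' b) sS'Y) //.
apply: IH; last by rewrite !cardsD1_in // cardS'.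
by have := proper_card (properD1 Sa); have := subset_leq_card sSX; lia.
Qed.

Lemma setcon_restr_card_eq X Y :
  #|X| = #|Y| -> setcon (restr A X) = setcon (restr A Y).
Proof. by move=> eqXY; apply/eqP; rewrite eqn_leq !setcon_restr_card_leq. Qed.

Lemma setcon_restr_succ P : 0 < setcon (restr A P) ->
  exists2 S : {set 'I_n}, S \in restr A P &
    forall Y : {set 'I_n}, #|Y| = #|S|.-1 -> setcon (restr A P) = (setcon (restr A Y)).+1.
Proof.
move=> hP_gt0; have nzR : restr A P != set0.
  by apply: contraTneq hP_gt0 => ->; rewrite setcon_empty.
have R_gt0 : 0 < #|restr A P| by rewrite card_gt0.
have [S SR defP] := eq_bigmax_cond
  (fun S => (\big[minn/n.+1]_(a in S) setcon (restr (restr A P) (S :\ a))).+1) R_gt0.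
exists S => // Y cardY; rewrite setconE (negbTE nzR) defP /=; congr _.+1.
move: SR; rewrite inE => /andP[SA sSP]; have [a Sa] := mem_live SA.
have termE b : b \in S -> setcon (restr (restr A P) (S :\ b)) = setcon (restr A Y).
  move=> Sb; rewrite restr_restr ?(subset_trans (subD1set S b) sSP) //.
  by apply: setcon_restr_card_eq; rewrite cardsD1_in.
apply/eqP; rewrite eqn_leq (leq_trans (bigmin_leq _ _ Sa)) ?termE //=.
apply: bigmin_geq => [|b Sb]; last by rewrite termE.
exact: leq_trans (setcon_restr_leq_n _) (leqnSn n).
Qed.

Lemma setcon_restr2_geq P Q :
  minn #|Q :&: P| (setcon (restr A P)) <= setcon (restr2 A P Q).
Proof.
have [m] := ubnP #|P|; elim: m P => // m IH P ltPm.
have [->|hP_gt0] := posnP (setcon (restr A P)); first by rewrite minn0.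
have [->|q_gt0] := posnP #|Q :&: P|; first by rewrite min0n.
have [S] := setcon_restr_succ hP_gt0; rewrite inE => /andP[SA sSP] hPE.
have [a Sa] := mem_live SA.
have k_gt0 : 0 < #|S| by apply/card_gt0P; exists a.
have [W [sWP cardW cardQW]] := exists_subset_meet Q (subset_leq_card sSP).
have WR : W \in restr2 A P Q.
  by rewrite !inE (symA SA cardW) sWP /= -card_gt0 setIC cardQW leq_min k_gt0.
rewrite -[minn _ _]prednK ?leq_min ?q_gt0 //; apply: setcon_gt WR _ _.
  by have := leq_cards_ord (Q :&: P); lia.
move=> b Wb; have sWbP := subset_trans (subD1set W b) sWP.
have ltWbm : #|W :\ b| < m.
  by have := proper_card (properD1 Wb); have := subset_leq_card sWP; lia.
rewrite restr2_restr //; apply: leq_trans (IH _ ltWbm).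
have := hPE (W :\ b); rewrite cardsD1_in // cardW => /(_ erefl) ->.
have := setcon_restr_leq_card (W :\ b) A0; rewrite cardsD1_in // cardW.
rewrite setIDA; have := cardsD1 b (Q :&: W); rewrite cardQW.
by case: (b \in Q :&: W) => /=; lia.
Qed.

End Symmetric.

Theorem theorem6 (n : nat) (A : adversary n) :
  set0 \notin A -> symmetric_adv A -> fair A.
Proof.
move=> A0 symA P Q sQP; have cardQ : #|Q :&: P| = #|Q| by rewrite (setIidPl sQP).
apply/eqP; rewrite eqn_leq -cardQ setcon_restr2_geq // leq_min setcon_restr2_leq_card.
by rewrite setcon_sub //; apply/subsetP => S; rewrite inE => /andP[].
Qed.
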